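(* Let $X$ be a non-empty finite set and $\mathcal{P}$ a partition of $X$ whose distinct block sizes are $l_1<l_2<\cdots<l_r$. Suppose $U\subseteq\Sigma(X,\mathcal{P})$ is such that $S(X,\mathcal{P})\cup U$ generates $\Sigma(X,\mathcal{P})$ as a semigroup, and let $i\in\{1,\ldots,r\}$ be such that either $i=1$ and $l_1\ne 1$, or $i\ge 2$ and $l_i-l_{i-1}\ge 2$. Then $\mathcal{C}_i\cap U\ne\emptyset$.
   Context: $T(X,\mathcal{P})$ is the semigroup (under composition) of maps $f:X\to X$ mapping each block of $\mathcal{P}$ into some block; $S(X,\mathcal{P})$ is its group of units (bijections in $T(X,\mathcal{P})$); $\Sigma(X,\mathcal{P})$ is the set of $f\in T(X,\mathcal{P})$ whose image intersects every block. For $i\le r$, $\mathcal{C}_i$ is the set of all $f\in\Sigma(X,\mathcal{P})$ such that $f$ maps each block into a block of the same size (possibly itself), there is one block of size $l_i$ whose image under $f$ has size $l_i-1$, and $f$ maps all other blocks injectively. *)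

From mathcomp Require Import all_boot.
Set Implicit Arguments. Unset Strict Implicit. Unset Printing Implicit Defensive.

Section PartSemigroups.
Variable T : finType.
Variable P : {set {set T}}.

Definition fcomp (f g : {ffun T -> T}) : {ffun T -> T} := [ffun x => f (g x)].

Definition inT (f : {ffun T -> T}) : Prop :=
  forall B, B \in P -> exists2 B', B' \in P & f @: B \subset B'.

Definition inS (f : {ffun T -> T}) : Prop := inT f /\ bijective f.

Definition inSigma (f : {ffun T -> T}) : Prop :=
  inT f /\ forall B, B \in P -> (f @: [set: T]) :&: B != set0.

Inductive gen (A : {ffun T -> T} -> Prop) : {ffun T -> T} -> Prop :=
| gen_base f : A f -> gen A f
| gen_comp f g : gen A f -> gen A g -> gen A (fcomp f g).

(* distinct block sizes in increasing order: l_1 < ... < l_r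
   (0-indexed: nth 0 block_sizes k = l_(k+1)) *)
Definition block_sizes : seq nat := sort leq (undup [seq #|pred_of_set B| | B <- enum P]).

(* C_(k+1), for a 0-based index k *)
Definition inC (k : nat) (f : {ffun T -> T}) : Prop :=
  [/\ inSigma f,
      (forall B, B \in P -> exists2 B', B' \in P & (#|B'| = #|B|) /\ f @: B \subset B') &
      exists2 B0, B0 \in P &
        [/\ #|B0| = nth 0 block_sizes k,
            #|f @: B0| = (nth 0 block_sizes k).-1 &
            forall B, B \in P -> B != B0 -> {in B &, injective f}]].

End PartSemigroups.

From mathcomp Require Import all_boot zify.

Set Implicit Arguments.
Unset Strict Implicit.
Unset Printing Implicit Defensive.

(* Let l = l_i >= 2 and let f collapse a point b of a block B0 of size l onto
   another point a of B0; f lies in Sigma. In a factorisation of f into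
   generators, the rightmost non-injective factor g comes from U, and f
   factors through g after an injective product s of units. As the kernel of f
   only identifies a and b, g only identifies s a and s b, which lie in the
   block s(B0) of size l. Since g is in Sigma it permutes the blocks; the image
   of s(B0) has l - 1 points, and l - 1 is not a block size, so its target
   block has at least l points. Comparing total sizes, every block is sent
   into a block of its own size, i.e. g is in C_i. *)

Lemma sorted_gap_succ (s : seq nat) k (x : nat) :
  sorted leq s -> k < size s -> k = 0 \/ 2 <= nth 0 s k - nth 0 s k.-1 ->
  x \in s -> x.+1 != nth 0 s k.
Proof.
move=> sorted_s k_lt gap x_s.
have mono := sorted_leq_nth leq_trans leqnn 0 sorted_s.
set j := index x s; have j_lt : j < size s by rewrite index_mem.
have xE : nth 0 s j = x := nth_index 0 x_s.
have [k_le | j_lt_k] := leqP k j.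
  by rewrite gtn_eqF // ltnS -xE (mono k) ?inE.
case: gap => [k0 | gap]; first by rewrite k0 in j_lt_k.
have km1_lt : k.-1 < size s by lia.
have j_le : j <= k.-1 by lia.
have := mono j k.-1; rewrite !inE xE => /(_ j_lt km1_lt j_le); lia.
Qed.

Section Collapse.
Variable T : finType.

Definition collapse (a b : T) : {ffun T -> T} := [ffun x => if x == b then a else x].

Lemma collapse_inj_off a b : {in [set~ b] &, injective (collapse a b)}.
Proof. by move=> x y; rewrite !inE !ffunE => /negPf -> /negPf ->. Qed.

Lemma collapse_collision a b : collapse a b a = collapse a b b.
Proof. by rewrite !ffunE eqxx; case: eqP. Qed.

Lemma collision_transfer (f g s : T -> T) a b :
  bijective s -> (forall x y, g (s x) = g (s y) -> f x = f y) ->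
  {in [set~ b] &, injective f} -> f a = f b -> a != b -> ~ injective g ->
  g (s a) = g (s b) /\ {in [set~ s b] &, injective g}.
Proof.
move=> [s' _ s'K] g_f f_inj fab ab /injectiveP /injectivePn [u [v uv guv]].
have f_fiber x : x != b -> f x = f b -> x = a.
  by move=> xb fx; apply: f_inj; rewrite ?inE // fx fab.
have s'uv : s' u != s' v by apply: contra uv => /eqP/(can_inj s'K)->.
have fuv : f (s' u) = f (s' v) by apply: g_f; rewrite !s'K.
split.
  have [ub | ub] := eqVneq (s' u) b.
    have va : s' v = a by apply: f_fiber; rewrite -?ub // eq_sym.
    by rewrite -va -ub !s'K.
  have [vb | vb] := eqVneq (s' v) b.
    have ua : s' u = a by apply: f_fiber; rewrite -?vb.
    by rewrite -ua -vb !s'K.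
  by case/eqP: s'uv; apply: f_inj; rewrite ?inE.
move=> p q; rewrite !inE => pb qb gpq.
rewrite -(s'K p) -(s'K q); congr s.
apply: f_inj; rewrite ?inE.
- by apply: contra pb => /eqP <-; rewrite s'K.
- by apply: contra qb => /eqP <-; rewrite s'K.
by apply: g_f; rewrite !s'K.
Qed.

End Collapse.

Section Partition.
Variables (T : finType) (P : {set {set T}}).

Lemma inT_fcomp f g : inT P f -> inT P g -> inT P (fcomp f g).
Proof.
move=> f_T g_T B B_P.
have [B1 B1_P gB] := g_T B B_P; have [B2 B2_P fB1] := f_T B1 B1_P.
exists B2 => //; apply/subsetP => _ /imsetP [x xB ->]; rewrite ffunE.
by apply/(subsetP fB1)/imset_f/(subsetP gB)/imset_f.
Qed.

Lemma gen_factor_noninjective (U : {ffun T -> T} -> Prop) h :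
  (forall g, U g -> inT P g) -> gen (fun g => inS P g \/ U g) h ->
  (injective h /\ inT P h) \/
  exists g s : {ffun T -> T}, [/\ U g, ~ injective g, injective s, inT P s &
    forall x y, g (s x) = g (s y) -> h x = h y].
Proof.
move=> U_T; elim=> {h} [f [[f_T /bij_inj f_inj] | Uf] | f1 f2 _ IH1 _ IH2].
- by left.
- have [/injectiveP f_inj | /injectiveP f_ninj] := boolP (injectiveb f).
    by left; split; last exact: U_T.
  right; exists f, [ffun x => x]; split => //.
  + by move=> x y; rewrite !ffunE.
  + move=> B B_P; exists B => //; apply/subsetP => _ /imsetP [x xB ->].
    by rewrite ffunE.
  + by move=> x y; rewrite !ffunE.
- case: IH2 => [[f2_inj f2_T] | [g [s [Ug g_ninj s_inj s_T g_f2]]]]; last first.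
    right; exists g, s; split => // x y /g_f2.
    by rewrite !ffunE => ->.
  case: IH1 => [[f1_inj f1_T] | [g [s [Ug g_ninj s_inj s_T g_f1]]]].
    left; split; last exact: inT_fcomp.
    by move=> x y; rewrite !ffunE => /f1_inj /f2_inj.
  right; exists g, (fcomp s f2); split => //.
  + by move=> x y; rewrite !ffunE => /s_inj /f2_inj.
  + exact: inT_fcomp.
  + by move=> x y; rewrite !ffunE => /g_f1.
Qed.

Lemma mem_block_sizes l :
  reflect (exists2 B, B \in P & #|B| = l) (l \in block_sizes P).
Proof.
rewrite /block_sizes mem_sort mem_undup.
apply: (iffP mapP) => [[B] | [B B_P <-]]; last by exists B; rewrite ?mem_enum.
by rewrite mem_enum => B_P ->; exists B.
Qed.

Hypothesis partP : partition P [set: T].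

Let coverP : cover P = [set: T]. Proof. by case/and3P: partP => /eqP. Qed.
Let trivP : trivIset P. Proof. by case/and3P: partP. Qed.

Lemma pblock_memT x : pblock P x \in P.
Proof. by rewrite pblock_mem ?coverP. Qed.

Lemma mem_pblockT x : x \in pblock P x.
Proof. by rewrite mem_pblock coverP. Qed.

Lemma block_nonempty B : B \in P -> exists x, x \in B.
Proof.
case/and3P: partP => _ _ P0 B_P.
have /set0Pn [x xB] : B != set0 by apply: contraNneq P0 => <-.
by exists x.
Qed.

Lemma eq_block B B' x : B \in P -> B' \in P -> x \in B -> x \in B' -> B = B'.
Proof.
by move=> B_P B'_P xB xB'; rewrite -(def_pblock trivP B_P xB) (def_pblock trivP B'_P xB').
Qed.

Definition block_image (h : {ffun T -> T}) (B : {set T}) : {set T} :=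
  if [pick x in B] is Some x then pblock P (h x) else B.

Lemma block_image_mem h B : B \in P -> block_image h B \in P.
Proof. by rewrite /block_image; case: pickP => [x _ _ | _ //]; apply: pblock_memT. Qed.

Lemma subset_block_image h B : inT P h -> B \in P -> h @: B \subset block_image h B.
Proof.
move=> h_T B_P; have [B' B'_P hB] := h_T B B_P.
suff -> : block_image h B = B' by [].
rewrite /block_image; case: pickP => [x xB | B_empty]; last first.
  by have [x] := block_nonempty B_P; rewrite B_empty.
apply: eq_block (pblock_memT _) B'_P (mem_pblockT _) _.
exact/(subsetP hB)/imset_f.
Qed.

Lemma block_image_onto h : inSigma P h -> block_image h @: P = P.
Proof.
move=> [h_T h_onto]; apply/eqP; rewrite eqEsubset; apply/andP; split.
  by apply/subsetP => _ /imsetP [B B_P ->]; apply: block_image_mem.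
apply/subsetP => B' B'_P.
have /set0Pn [_ /setIP [/imsetP [x _ ->] hxB']] := h_onto B' B'_P.
have hx : h x \in block_image h (pblock P x).
  exact/(subsetP (subset_block_image h_T (pblock_memT x)))/imset_f/mem_pblockT.
rewrite (eq_block B'_P (block_image_mem h (pblock_memT x)) hxB' hx).
exact/imset_f/pblock_memT.
Qed.

Lemma card_block_image h : inSigma P h ->
  {in P, forall B : {set T}, #|B| <= #|block_image h B|} ->
  {in P, forall B : {set T}, #|block_image h B| = #|B|}.
Proof.
move=> h_S le_card B B_P.
have image_inj : {in P &, injective (block_image h)}.
  by apply/imset_injP; rewrite block_image_onto.
have sum_eq : \sum_(C in P) #|block_image h C| = \sum_(C in P) #|C|.
  by rewrite -[in RHS](block_image_onto h_S) big_imset.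
have := (leqif_sum (fun C C_P => leqif_geq (le_card C C_P))).2.
rewrite sum_eq eqxx => /esym/forall_inP/(_ B B_P) ge_card.
by apply/eqP; rewrite eqn_leq ge_card le_card.
Qed.

Lemma card_block_image_inj (s : {ffun T -> T}) : injective s -> inT P s ->
  {in P, forall B : {set T}, #|block_image s B| = #|B|}.
Proof.
move=> s_inj s_T; have [s' _ s'K] := injF_bij s_inj.
have s_S : inSigma P s.
  split=> // B B_P; have [x xB] := block_nonempty B_P.
  by apply/set0Pn; exists x; rewrite inE xB -{1}(s'K x) imset_f.
apply: card_block_image => // B B_P.
by rewrite -(card_imset _ s_inj) subset_leq_card ?subset_block_image.
Qed.

Lemma collapse_inSigma a b B :
  B \in P -> a \in B -> b \in B -> inSigma P (collapse a b).
Proof.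
move=> B_P aB bB.
have in_block x : collapse a b x \in pblock P x.
  rewrite ffunE; case: eqP => [-> | _]; last exact: mem_pblockT.
  by rewrite (def_pblock trivP B_P bB).
split=> [C C_P | C C_P].
  exists C => //; apply/subsetP => _ /imsetP [x xC ->].
  by rewrite -(def_pblock trivP C_P xC).
have [x xC] := block_nonempty C_P.
apply/set0Pn; exists (collapse a b x).
by rewrite inE imset_f ?inE //= -(def_pblock trivP C_P xC).
Qed.

Lemma inC_of_collision k g C p q :
  inSigma P g -> C \in P -> p \in C -> q \in C -> p != q -> g p = g q ->
  {in [set~ q] &, injective g} -> #|C| = nth 0 (block_sizes P) k ->
  {in P, forall B : {set T}, #|B|.+1 != nth 0 (block_sizes P) k} -> inC P k g.
Proof.
move=> g_S C_P pC qC pq gpq g_inj cardC no_pred.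
have inj_off_C B : B \in P -> B != C -> {in B &, injective g}.
  move=> B_P BC x y xB yB; apply: g_inj; rewrite !inE.
  - by apply: contra BC => /eqP xq; rewrite (eq_block B_P C_P xB) // xq.
  - by apply: contra BC => /eqP yq; rewrite (eq_block B_P C_P yB) // yq.
have card_gC : #|g @: C| = #|C|.-1.
  have -> : g @: C = g @: (C :\ q).
    apply/eqP; rewrite eqEsubset (imsetS _ (subsetDl C [set q])) andbT.
    apply/subsetP => _ /imsetP [x xC ->].
    have [-> | xq] := eqVneq x q; first by rewrite -gpq imset_f // !inE pq.
    by rewrite imset_f // !inE xq.
  rewrite card_in_imset; first by rewrite (cardsD1 q C) qC.
  by move=> x y; rewrite !inE => /andP [xq _] /andP [yq _]; apply: g_inj; rewrite ?inE.
have card_image : {in P, forall B : {set T}, #|block_image g B| = #|B|}.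
  apply: card_block_image => // B B_P.
  have [-> | BC] := eqVneq B C; last first.
    by rewrite -(card_in_imset (inj_off_C B B_P BC)) (subset_leq_card (subset_block_image g_S.1 B_P)).
  have := subset_leq_card (subset_block_image g_S.1 C_P).
  have := no_pred _ (block_image_mem g C_P).
  have : 0 < #|C| by apply/card_gt0P; exists p.
  rewrite card_gC -cardC; lia.
split=> //.
  move=> B B_P; exists (block_image g B); first exact: block_image_mem.
  by rewrite card_image // subset_block_image //; case: g_S.
by exists C => //; split=> //; rewrite card_gC cardC.
Qed.

End Partition.

Theorem lemma4p2 (T : finType) (P : {set {set T}}) (U : {ffun T -> T} -> Prop)
  (k : nat) :
  0 < #|T| ->
  partition P [set: T] ->
  (forall f, U f -> inSigma P f) ->
  (forall f, inSigma P f <-> gen (fun g => inS P g \/ U g) f) ->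
  k < size (block_sizes P) ->
  (k = 0 /\ nth 0 (block_sizes P) 0 != 1) \/
  (0 < k /\ 2 <= nth 0 (block_sizes P) k - nth 0 (block_sizes P) k.-1) ->
  exists f, inC P k f /\ U f.
Proof.
move=> _ partP U_S gen_S k_lt gap.
have [B0 B0_P cardB0] : exists2 B0, B0 \in P & #|B0| = nth 0 (block_sizes P) k.
  exact/mem_block_sizes/mem_nth.
have [a [b [aB0 bB0 ab]]] : exists a b, [/\ a \in B0, b \in B0 & a != b].
  apply/card_gt1P; have [x xB0] := block_nonempty partP B0_P.
  have : 0 < #|B0| by apply/card_gt0P; exists x.
  by rewrite cardB0; case: gap => [[-> l_neq1] | [_ l_gap]]; lia.
have [[f_inj _] | [g [s [Ug g_ninj s_inj s_T g_f]]]] :=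
  gen_factor_noninjective (fun g Ug => (U_S g Ug).1)
    ((gen_S _).1 (collapse_inSigma partP B0_P aB0 bB0)).
  by case/eqP: ab; apply: f_inj; apply: collapse_collision.
have [gab g_inj] := collision_transfer (injF_bij s_inj) g_f
  (@collapse_inj_off _ a b) (collapse_collision a b) ab g_ninj.
have sB0 x : x \in B0 -> s x \in block_image P s B0.
  by move=> xB0; apply/(subsetP (subset_block_image partP s_T B0_P))/imset_f.
exists g; split=> //.
apply: (inC_of_collision partP (U_S g Ug) (block_image_mem partP s B0_P)
  (sB0 a aB0) (sB0 b bB0) _ gab g_inj).
- by rewrite (inj_eq s_inj).
- by rewrite card_block_image_inj.
move=> B B_P; apply: sorted_gap_succ => //.
- exact/sort_sorted/leq_total.
- by case: gap => [[-> _] | [_ l_gap]]; [left | right].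
by apply/mem_block_sizes; exists B.
Qed.
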